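(* Let $S=\langle P,\varphi\rangle$ be a SUT model, $t$ a strength and $N\ge 1$ an integer. The propositional formula $Sat_{CX}^{N,t,S}=X\wedge C\wedge CX\wedge SUTX$ (defined in the context) is satisfiable if and only if a covering array $CA(N;t,S)$ exists.
   Context: A SUT model is $S=\langle P,\varphi\rangle$, where $P$ is a finite set of parameters, each $p\in P$ having a finite nonempty domain $d(p)$, and $\varphi$ is a propositional formula whose atoms have the form $(p=v)$ with $p\in P$, $v\in d(p)$. A test case is a full assignment $A$ giving each $p\in P$ a value in $d(p)$ such that $\varphi$ evaluates to true when each atom $(p=v)$ is read as true iff $A(p)=v$; it is assumed that at least one test case exists. Fix a strength $t$ with $1\le t\le |P|$. A $t$-tuple is an assignment of values (from their domains) to exactly $t$ distinct parameters, viewed as a set of pairs $(p,v)$. A test case covers a $t$-tuple $\tau$ if it assigns $v$ to $p$ for every $(p,v)\in\tau$. A $t$-tuple is allowed if some test case covers it (forbidden otherwise); $\mathcal{T}_a$ denotes the set of allowed $t$-tuples. A covering array $CA(N;t,S)$ is a list of $N$ test cases (repetitions allowed) such that every allowed $t$-tuple is covered by at least one of them. Write $[N]=\{1,\dots,N\}$. Propositional variables: $x_{i,p,v}$ for $i\in[N]$, $p\in P$, $v\in d(p)$ (meaning ''test $i$ assigns $v$ to $p$''), and $c^i_\tau$ for $i\in[N]$, $\tau\in\mathcal T_a$. Constraints (each read as a Boolean constraint; any CNF translation, possibly with auxiliary variables, preserving satisfiability may be used): (X) for every $i\in[N]$ and $p\in P$: exactly one of $\{x_{i,p,v}: v\in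 d(p)\}$ is true; (SUTX) for every $i\in[N]$: the formula $\varphi_i$ obtained from $\varphi$ by replacing every atom $(p=v)$ with $x_{i,p,v}$; (CX) for every $i\in[N]$, $\tau\in\mathcal T_a$, $(p,v)\in\tau$: $c^i_\tau\rightarrow x_{i,p,v}$; (C) for every $\tau\in\mathcal T_a$: $\bigvee_{i\in[N]} c^i_\tau$. *)

From mathcomp Require Import all_boot.
Set Implicit Arguments. Unset Strict Implicit. Unset Printing Implicit Defensive.

Inductive form (A : Type) : Type :=
  | FTrue | FFalse
  | Atom of A
  | Not of form A
  | And of form A & form A
  | Or of form A & form A
  | Imp of form A & form A.
Arguments FTrue {A}. Arguments FFalse {A}.

Fixpoint eval (A : Type) (s : A -> bool) (f : form A) : bool :=
  match f with
  | FTrue => true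
  | FFalse => false
  | Atom a => s a
  | Not g => ~~ eval s g
  | And g h => eval s g && eval s h
  | Or g h => eval s g || eval s h
  | Imp g h => eval s g ==> eval s h
  end.

Fixpoint map_form (A B : Type) (r : A -> B) (f : form A) : form B :=
  match f with
  | FTrue => FTrue
  | FFalse => FFalse
  | Atom a => Atom (r a)
  | Not g => Not (map_form r g)
  | And g h => And (map_form r g) (map_form r h)
  | Or g h => Or (map_form r g) (map_form r h)
  | Imp g h => Imp (map_form r g) (map_form r h)
  end.

Definition bigAnd (A : Type) (l : seq (form A)) : form A := foldr (@And A) FTrue l.
Definition bigOr (A : Type) (l : seq (form A)) : form A := foldr (@Or A) FFalse l.

Definition satisfiable (A : Type) (f : form A) : Prop := exists s : A -> bool, eval s f.

(* SUT model: parameters P (finite), domain V p of each parameter (finite),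
   constraint phi whose atoms (p = v) are dependent pairs (p; v). *)
Section SUT.
Variables (P : finType) (V : P -> finType).

Definition atom := {p : P & V p}.
Definition assignment := {dffun forall p : P, V p}.

Definition atom_true (A : assignment) (a : atom) : bool := Tagged V (A (tag a)) == a.

Definition test_case (phi : form atom) (A : assignment) : bool := eval (atom_true A) phi.

Definition is_ttuple (t : nat) (tau : {set atom}) : bool :=
  (#|tau| == t) && (#|[set tag x | x in tau]| == t).

Definition covers (A : assignment) (tau : {set atom}) : bool :=
  [forall x in tau, atom_true A x].

Definition allowed (phi : form atom) (t : nat) (tau : {set atom}) : bool :=
  is_ttuple t tau && [exists A : assignment, test_case phi A && covers A tau].

Definition is_covering_array (phi : form atom) (t N : nat) (CA : 'I_N -> assignment) : Prop :=
  (forall i, test_case phi (CA i)) /\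
  (forall tau, allowed phi t tau -> exists i, covers (CA i) tau).

(* Variables of Sat_CX: inl (i, (p;v)) is x_{i,p,v}; inr (i, tau) is c^i_tau *)
Definition satvar (N : nat) : Type := ('I_N * atom) + ('I_N * {set atom}).

Definition xv (N : nat) (i : 'I_N) (a : atom) : form (satvar N) := Atom (inl (i, a)).
Definition cv (N : nat) (i : 'I_N) (tau : {set atom}) : form (satvar N) := Atom (inr (i, tau)).

Definition Ta (phi : form atom) (t : nat) : seq {set atom} :=
  [seq tau <- enum {set atom} | allowed phi t tau].

Definition X_constr (N : nat) : form (satvar N) :=
  bigAnd [seq And (bigOr [seq xv i (Tagged V v) | v <- enum (V p)])
                  (bigAnd [seq Not (And (xv i (Tagged V v)) (xv i (Tagged V w)))
                          | v <- enum (V p), w <- [seq w <- enum (V p) | v != w]])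
         | i <- enum 'I_N, p <- enum P].

Definition SUTX_constr (phi : form atom) (N : nat) : form (satvar N) :=
  bigAnd [seq map_form (fun a => (inl (i, a) : satvar N)) phi | i <- enum 'I_N].

Definition CX_constr (phi : form atom) (t N : nat) : form (satvar N) :=
  bigAnd [seq bigAnd [seq Imp (cv i tau) (xv i a) | a <- enum tau]
         | i <- enum 'I_N, tau <- Ta phi t].

Definition C_constr (phi : form atom) (t N : nat) : form (satvar N) :=
  bigAnd [seq bigOr [seq cv i tau | i <- enum 'I_N] | tau <- Ta phi t].

Definition SatCX (phi : form atom) (t N : nat) : form (satvar N) :=
  And (X_constr N) (And (C_constr phi t N) (And (CX_constr phi t N) (SUTX_constr phi N))).

End SUT.

From mathcomp Require Import all_boot.
Set Implicit Arguments. Unset Strict Implicit. Unset Printing Implicit Defensive.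

(* A valuation satisfying (X) is the characteristic function of N assignments;
   (SUTX) then says that these are test cases, and (CX), (C) say that every
   allowed tuple is covered by one of them, c^i_tau witnessing that test i does
   it.  Conversely, N test cases covering all allowed tuples are encoded by
   setting x_{i,p,v} := (A_i(p) = v) and c^i_tau := (A_i covers tau).
   None of the side conditions on domains, t and N is needed. *)

Lemma eval_bigAnd (A : Type) (s : A -> bool) (l : seq (form A)) :
  eval s (bigAnd l) = all (eval s) l.
Proof. by elim: l => //= f l ->. Qed.

Lemma eval_bigOr (A : Type) (s : A -> bool) (l : seq (form A)) :
  eval s (bigOr l) = has (eval s) l.
Proof. by elim: l => //= f l ->. Qed.

Lemma eval_map_form (A B : Type) (r : A -> B) (s : B -> bool) (f : form A) :
  eval s (map_form r f) = eval (fun a => s (r a)) f.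
Proof. by elim: f => //= [g -> | g -> h -> | g -> h -> | g -> h ->]. Qed.

Lemma eq_eval (A : Type) (s1 s2 : A -> bool) (f : form A) :
  s1 =1 s2 -> eval s1 f = eval s2 f.
Proof. by move=> E; elim: f => /= [||a|g ->|g -> h ->|g -> h ->|g -> h ->]. Qed.

Section Encoding.

Variables (P : finType) (V : P -> finType) (N : nat).
Implicit Types (s : satvar V N -> bool) (CA : 'I_N -> assignment V).

Lemma atom_trueE (A : assignment V) (p : P) (v : V p) :
  atom_true A (Tagged V v) = (A p == v).
Proof. by rewrite /atom_true eq_Tagged. Qed.

Lemma mem_Ta (phi : form (atom V)) (t : nat) (tau : {set atom V}) :
  (tau \in Ta phi t) = allowed phi t tau.
Proof. by rewrite /Ta mem_filter mem_enum andbT. Qed.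

Definition decodes s CA := forall i a, s (inl (i, a)) = atom_true (CA i) a.

Definition encode CA (x : satvar V N) : bool :=
  match x with
  | inl (i, a) => atom_true (CA i) a
  | inr (i, tau) => covers (CA i) tau
  end.

Lemma eval_X_constr s :
  eval s (X_constr V N) <-> forall i p, exists! v : V p, s (inl (i, Tagged V v)).
Proof.
rewrite /X_constr eval_bigAnd; split=> [/all_allpairsP sX i p | sX].
  have := sX i p (mem_enum _ _) (mem_enum _ _).
  rewrite /= eval_bigOr eval_bigAnd has_map.
  move=> /andP[/hasP[v _ /= sv] /all_allpairsP uniq_v].
  exists v; split=> // w sw; apply/eqP/negPn/negP => neq_vw.
  have := uniq_v v w (mem_enum _ _); rewrite mem_filter neq_vw mem_enum.
  by move=> /(_ isT) /=; rewrite /xv /= sv sw.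
apply/all_allpairsP => i p _ _ /=; have [v [sv uniq_v]] := sX i p.
rewrite eval_bigOr eval_bigAnd has_map; apply/andP; split.
  by apply/hasP; exists v; rewrite ?mem_enum.
apply/all_allpairsP => w u _; rewrite mem_filter => /andP[neq_wu _] /=.
apply/negP => /andP[/uniq_v eq_vw /uniq_v eq_vu].
by rewrite -eq_vw -eq_vu eqxx in neq_wu.
Qed.

Lemma unique_values_decode s :
  (forall i p, exists! v : V p, s (inl (i, Tagged V v))) <-> exists CA, decodes s CA.
Proof.
split=> [sX | [CA sCA] i p]; last first.
  by exists (CA i p); split=> [|v]; rewrite sCA atom_trueE // => /eqP.
have sX_ex i p : exists v : V p, s (inl (i, Tagged V v)).
  by have [v [sv _]] := sX i p; exists v.
exists (fun i => [ffun p => xchoose (sX_ex i p)]) => i [p v].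
rewrite atom_trueE ffunE; have [w [sw uniq_w]] := sX i p.
have <- := uniq_w _ (xchooseP (sX_ex i p)).
by apply/idP/eqP => [/uniq_w | <-].
Qed.

Lemma X_constr_decodes s : eval s (X_constr V N) <-> exists CA, decodes s CA.
Proof. exact: iff_trans (eval_X_constr s) (unique_values_decode s). Qed.

Lemma eval_SUTX_constr (phi : form (atom V)) s CA :
  decodes s CA -> eval s (SUTX_constr phi N) = [forall i, test_case phi (CA i)].
Proof.
move=> sCA; rewrite /SUTX_constr eval_bigAnd all_map.
apply/allP/forallP => [sS i | CAS i _] /=.
  by rewrite /test_case -(eq_eval _ (sCA i)) -eval_map_form; apply: sS; rewrite mem_enum.
by rewrite eval_map_form (eq_eval _ (sCA i)); apply: CAS.
Qed.

Lemma eval_C_constr (phi : form (atom V)) (t : nat) s :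
  eval s (C_constr phi t N) = all (fun tau => [exists i, s (inr (i, tau))]) (Ta phi t).
Proof.
rewrite /C_constr eval_bigAnd all_map; apply/eq_all => tau /=.
by rewrite eval_bigOr has_map; apply/hasP/existsP => [[i]|[i]]; exists i; rewrite ?mem_enum.
Qed.

Lemma eval_CX_constr (phi : form (atom V)) (t : nat) s CA :
  decodes s CA ->
  eval s (CX_constr phi t N) =
  [forall i, all (fun tau => s (inr (i, tau)) ==> covers (CA i) tau) (Ta phi t)].
Proof.
move=> sCA; rewrite /CX_constr eval_bigAnd.
apply/all_allpairsP/forallP => [sCX i | sCX i tau _ Ta_tau] /=.
  apply/allP => tau Ta_tau; have := sCX i tau (mem_enum _ _) Ta_tau.
  rewrite /= eval_bigAnd all_map => /allP sCXi; apply/implyP => c_itau.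
  by apply/forallP => a; apply/implyP => tau_a; rewrite -sCA (implyP (sCXi a _)) ?mem_enum.
rewrite eval_bigAnd all_map; apply/allP => a; rewrite mem_enum => tau_a /=.
by apply/implyP => /(implyP (allP (sCX i) tau Ta_tau)) /forallP /(_ a); rewrite tau_a sCA.
Qed.

End Encoding.

Theorem proposition1 (P : finType) (V : P -> finType) (phi : form (atom V))
    (t N : nat)
    (Hdom : forall p : P, 0 < #|V p|)
    (Hex : exists A : assignment V, test_case phi A)
    (Ht1 : 1 <= t) (Ht2 : t <= #|P|) (HN : 1 <= N) :
  satisfiable (SatCX phi t N) <->
  exists CA : 'I_N -> assignment V, is_covering_array phi t CA.
Proof.
split=> [[s] | [CA [CA_tests CA_covers]]].
  rewrite /SatCX /= => /and4P[/X_constr_decodes[CA sCA] sC sCX sS].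
  exists CA; split=> [i | tau allowed_tau].
    by move: sS; rewrite (eval_SUTX_constr _ sCA) => /forallP.
  have Ta_tau : tau \in Ta phi t by rewrite mem_Ta.
  move: sC; rewrite eval_C_constr => /allP /(_ _ Ta_tau) /existsP[i c_itau].
  move: sCX; rewrite (eval_CX_constr _ _ sCA) => /forallP /(_ i) /allP /(_ _ Ta_tau).
  by rewrite c_itau; exists i.
exists (encode CA); have eCA : decodes (encode CA) CA by [].
rewrite /SatCX /= (eval_SUTX_constr _ eCA) (eval_CX_constr _ _ eCA) eval_C_constr.
apply/and4P; split.
- by apply/X_constr_decodes; exists CA.
- by apply/allP => tau; rewrite mem_Ta => /CA_covers[i cov_i]; apply/existsP; exists i.
- by apply/forallP => i; apply/allP => tau _; apply/implyP.
- exact/forallP.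
Qed.
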